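(* Let $t$ be the Thue-Morse word. For every occurrence $t(i..j]$ in $t$ of a palindrome of positive length $j-i\notin\{1,3\}$, there is $m\in\{0,1,2,3\}$ such that $i\equiv m \pmod 4$ and $j\equiv 4-m \pmod 4$; equivalently, $i+j\equiv 0 \pmod 4$.
   Context: The Thue-Morse word $t=t[1]t[2]\cdots=abbabaabbaababba\cdots$ is the fixed point starting with $a$ of the morphism $\tau: a\mapsto abba,\ b\mapsto baab$. For $0\le i\le j$, $t(i..j]$ denotes the factor $t[i+1]t[i+2]\cdots t[j]$. A palindrome is a word $p=p[1]\cdots p[n]$ with $p[i]=p[n-i+1]$ for all $i$. *)

From mathcomp Require Import all_boot.
Set Implicit Arguments. Unset Strict Implicit. Unset Printing Implicit Defensive.

Definition letter := bool.
Definition la : letter := false.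
Definition lb : letter := true.

Definition tau1 (x : letter) : seq letter :=
  if x then [:: lb; la; la; lb] else [:: la; lb; lb; la].
Definition tau (w : seq letter) : seq letter := flatten (map tau1 w).

Definition tau_iter (k : nat) : seq letter := iter k tau [:: la].

(* The Thue-Morse word t = t[1] t[2] ..., 1-indexed: the fixed point of tau
   starting with a.  t[n] is read off tau^n(a), which has length 4^n >= n.
   (t[0] is unused.) *)
Definition tmw (n : nat) : letter := nth la (tau_iter n) n.-1.

(* The factor t(i..j] = t[i+1] ... t[j]. *)
Definition factor (i j : nat) : seq letter := [seq tmw k | k <- iota i.+1 (j - i)].

Definition palindrome (p : seq letter) : bool := p == rev p.

From mathcomp Require Import all_boot.
From mathcomp Require Import zify.

(* Since tau = mu^2 for the Thue-Morse morphism mu : a |-> ab, b |-> ba, the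
   0-indexed word tm n := t[n+1] satisfies tm (2n) = tm n and
   tm (2n+1) = ~~ tm n.  Hence the two letters of every aligned pair differ.
   The two middle letters of an even palindrome are equal, so they straddle
   a pair boundary, which is exactly i + j = 0 (mod 4).  An odd palindrome of
   length at least 5 contains a palindrome xyzyx; undoing one step of mu turns
   it into three equal consecutive letters, and one of the two pairs inside
   them is aligned, a contradiction. *)

Lemma double_or_doubleS (n : nat) : exists m, n = m.*2 \/ n = m.*2.+1.
Proof. by exists n./2; lia. Qed.

Lemma size_tau1 (x : letter) : size (tau1 x) = 4.
Proof. by case: x. Qed.

Lemma tau_cat (u v : seq letter) : tau (u ++ v) = tau u ++ tau v.
Proof. by rewrite /tau map_cat flatten_cat. Qed.

Lemma size_tau (w : seq letter) : size (tau w) = 4 * size w.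
Proof. by elim: w => //= x w IHw; rewrite size_cat size_tau1 -/(tau w) IHw mulnS. Qed.

Lemma iter_tau_cat (k : nat) (u v : seq letter) :
  iter k tau (u ++ v) = iter k tau u ++ iter k tau v.
Proof. by elim: k => //= k ->; rewrite tau_cat. Qed.

Lemma size_tau_iter (k : nat) : size (tau_iter k) = 4 ^ k.
Proof. by elim: k => //= k IHk; rewrite size_tau IHk expnS. Qed.

Lemma tau_iter_prefix (k : nat) :
  tau_iter k.+1 = tau_iter k ++ iter k tau [:: lb; lb; la].
Proof. by rewrite /tau_iter iterSr -iter_tau_cat. Qed.

Lemma nth_tau (w : seq letter) (q r : nat) : q < size w -> r < 4 ->
  nth la (tau w) (4 * q + r) = nth la (tau1 (nth la w q)) r.
Proof.
move=> + lt_r4; elim: w q => [|x w IHw] [|q] //= lt_q.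
  by rewrite nth_cat size_tau1 lt_r4.
rewrite nth_cat size_tau1 ifF; last by lia.
by rewrite -IHw //; congr nth; lia.
Qed.

Definition tm (n : nat) : letter := tmw n.+1.

Lemma nth_tau_iter_add (k d n : nat) :
  n < 4 ^ k -> nth la (tau_iter (k + d)) n = nth la (tau_iter k) n.
Proof.
move=> lt_n; elim: d => [|d IHd]; first by rewrite addn0.
rewrite addnS tau_iter_prefix nth_cat size_tau_iter IHd ifT //.
by rewrite (leq_trans lt_n) // leq_pexp2l ?leq_addr.
Qed.

Lemma nth_tau_iter (k n : nat) : n < 4 ^ k -> nth la (tau_iter k) n = tm n.
Proof.
have lt_n_4n : n < 4 ^ n.+1 by rewrite expnS; have := @ltn_expl 4 n; lia.
move=> lt_n; rewrite /tm /tmw succnK.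
have [le_k | /ltnW le_k] := leqP k n.+1.
  by rewrite -(subnKC le_k) nth_tau_iter_add.
by rewrite -(subnKC le_k) nth_tau_iter_add.
Qed.

Lemma tm_block (q r : nat) : r < 4 -> tm (4 * q + r) = nth la (tau1 (tm q)) r.
Proof.
have lt_q : q < 4 ^ q.+1 by rewrite expnS; have := @ltn_expl 4 q; lia.
move=> lt_r4; rewrite -(nth_tau_iter q.+2); last by rewrite expnS; lia.
rewrite -[tau_iter q.+2]/(tau (tau_iter q.+1)).
by rewrite nth_tau ?size_tau_iter // nth_tau_iter.
Qed.

Lemma tm_double (n : nat) : tm n.*2 = tm n /\ tm n.*2.+1 = ~~ tm n.
Proof.
have tm4 q : [/\ tm (4 * q) = tm q, tm (4 * q + 1) = ~~ tm q,
                tm (4 * q + 2) = ~~ tm q & tm (4 * q + 3) = tm q].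
  by rewrite -{1}[4 * q]addn0 !tm_block //; case: (tm q).
elim/ltn_ind: n => n IHn.
have [m [En | En]] := double_or_doubleS n.
- move: En; have [-> -> | pos_m En] := posnP m.
    by have [_ <- _ _] := tm4 0.
  have [tm_m2 _] := IHn m ltac:(lia).
  have [h0 h1 _ _] := tm4 m.
  have -> : n.*2.+1 = 4 * m + 1 by lia.
  have -> : n.*2 = 4 * m by lia.
  by rewrite h0 h1 En tm_m2.
- have [_ tm_m2S] := IHn m ltac:(lia).
  have [_ _ h2 h3] := tm4 m.
  have -> : n.*2.+1 = 4 * m + 3 by lia.
  have -> : n.*2 = 4 * m + 2 by lia.
  by rewrite h2 h3 En tm_m2S negbK.
Qed.

Lemma tm_doubleS_neq (n : nat) : tm n.*2 != tm n.*2.+1.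
Proof. by have [-> ->] := tm_double n; case: (tm n). Qed.

Lemma tm_cube_free (k : nat) : tm k = tm k.+1 -> tm k.+1 = tm k.+2 -> False.
Proof.
have [m [Ek | Ek]] := double_or_doubleS k.
  by rewrite Ek => /eqP; rewrite (negbTE (tm_doubleS_neq m)).
by rewrite Ek -doubleS => _ /eqP; rewrite (negbTE (tm_doubleS_neq m.+1)).
Qed.

Lemma tm_palindrome5_free (d : nat) : tm d = tm d.+4 -> tm d.+1 = tm d.+3 -> False.
Proof.
have [m [Ed | Ed]] := double_or_doubleS d.
- rewrite Ed -!doubleS.
  have [-> ->] := tm_double m; have [_ ->] := tm_double m.+1.
  have [-> _] := tm_double m.+2.
  by move=> tm_m02 /negb_inj tm_m01; apply: (tm_cube_free _ tm_m01); rewrite -tm_m01.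
- rewrite Ed -!doubleS.
  have [_ ->] := tm_double m; have [-> _] := tm_double m.+1.
  have [-> ->] := tm_double m.+2.
  by move=> /negb_inj tm_m02 tm_m12; apply: (tm_cube_free _ _ tm_m12); rewrite tm_m12.
Qed.

Lemma nth_factor (i j k : nat) : k < j - i -> nth la (factor i j) k = tm (i + k).
Proof. by move=> lt_k; rewrite (nth_map 0) ?size_iota // nth_iota // addSn. Qed.

Lemma palindrome_factor_mirror (i j k l : nat) :
  palindrome (factor i j) -> k + l.+1 = j - i -> tm (i + k) = tm (i + l).
Proof.
move=> /eqP pal len.
have size_f : size (factor i j) = j - i by rewrite size_map size_iota.
rewrite -!(@nth_factor i j); try lia.
by rewrite {1}pal nth_rev size_f; [congr nth; lia | lia].
Qed.

Lemma even_palindrome_center (i h : nat) :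
  0 < h -> palindrome (factor i (i + h.*2)) -> ~~ odd (i + h).
Proof.
move=> pos_h pal; apply/negP => odd_ih.
have [m [Em | Em]] := double_or_doubleS (i + h).
  by rewrite Em odd_double in odd_ih.
have := palindrome_factor_mirror _ _ h.-1 h pal ltac:(lia).
have -> : i + h.-1 = m.*2 by lia.
by rewrite Em; apply/eqP/tm_doubleS_neq.
Qed.

Lemma odd_palindrome_short (i h : nat) :
  palindrome (factor i (i + h.*2.+1)) -> h < 2.
Proof.
move=> pal; rewrite ltnNge; apply/negP => le2h.
have mirror k l : k + l.+1 = h.*2.+1 -> tm (i + k) = tm (i + l).
  by move=> len; apply: palindrome_factor_mirror pal _; lia.
apply: (@tm_palindrome5_free (i + (h - 2))).
  have -> : (i + (h - 2)).+4 = i + (h + 2) by lia.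
  by apply: mirror; lia.
have -> : (i + (h - 2)).+3 = i + (h + 1) by lia.
have -> : (i + (h - 2)).+1 = i + (h - 1) by lia.
by apply: mirror; lia.
Qed.

Theorem proposition5 (i j : nat) :
  i < j -> j - i != 1 -> j - i != 3 ->
  palindrome (factor i j) ->
  exists2 m : nat, m < 4 & (i = m %[mod 4]) /\ (j = 4 - m %[mod 4]).
Proof.
move=> lt_ij len1 len3 pal.
suff sum4 : (i + j) %% 4 = 0.
  by exists (i %% 4); [rewrite ltn_mod | split; [rewrite modn_mod | lia]].
have [h [Elen | Elen]] := double_or_doubleS (j - i).
- have Ej : j = i + h.*2 by lia.
  rewrite Ej in pal; have := even_palindrome_center i h ltac:(lia) pal; lia.
- have Ej : j = i + h.*2.+1 by lia.
  rewrite Ej in pal; have := odd_palindrome_short i h pal; lia.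
Qed.
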